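(* Let $S$ be a nonempty set and $X=\ell^{\infty}(S)$ with the sup-norm metric and base point $0$. Then the function identically equal to $0$ is not a metric functional of $X$. In fact, every metric functional of $X$ is an unbounded function.
   Context: For a metric space $(X,d)$ with base point $x_0$, let $\mathrm{Hom}(X,\mathbb{R})$ be the set of $1$-Lipschitz functions $X\to\mathbb{R}$ with the topology of pointwise convergence and $h_y(\cdot)=d(\cdot,y)-d(x_0,y)$ for $y\in X$. Metric functionals are the elements of the closure of $\{h_y:y\in X\}$ in $\mathrm{Hom}(X,\mathbb{R})$. *)

From HB Require Import structures.
From mathcomp Require Import all_boot all_order all_algebra.
From mathcomp Require Import all_classical all_reals all_analysis.
Set Implicit Arguments. Unset Strict Implicit. Unset Printing Implicit Defensive.
Import Order.TTheory GRing.Theory Num.Theory.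
Local Open Scope classical_set_scope.
Local Open Scope ring_scope.

Record linf (R : realType) (S : Type) := Linf {
  linf_fun :> S -> R;
  linf_bounded : exists M : R, forall s, `|linf_fun s| <= M }.

Definition linf_dist (R : realType) (S : Type) (f g : linf R S) : R :=
  sup [set `|f s - g s| | s in [set: S]].

Lemma linf0_bounded (R : realType) (S : Type) :
  exists M : R, forall s : S, `|(fun _ : S => 0 : R) s| <= M.
Proof. by exists 0 => s; rewrite normr0. Qed.

Definition linf0 (R : realType) (S : Type) : linf R S :=
  @Linf R S (fun _ => 0) (linf0_bounded R S).

Definition lip1 (R : realType) (S : Type) (h : linf R S -> R) : Prop :=
  forall x y, `|h x - h y| <= linf_dist x y.

Definition hfun (R : realType) (S : Type) (y : linf R S) : linf R S -> R :=
  fun x => linf_dist x y - linf_dist (linf0 R S) y.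

(* metric functional: element of Hom(X,R) lying in the closure of {h_y} for
   the topology of pointwise convergence (closure in the subspace Hom(X,R)
   = ambient closure in the product topology intersected with Hom(X,R)). *)
Definition metric_functional (R : realType) (S : Type) (h : linf R S -> R) : Prop :=
  lip1 h /\
  closure ([set hfun y | y in [set: linf R S]] : set {ptws linf R S -> R^o}) h.

Definition unbounded_fun (R : realType) (S : Type) (h : linf R S -> R) : Prop :=
  ~ (exists M : R, forall x, `|h x| <= M).

From HB Require Import structures.
From mathcomp Require Import all_boot all_order all_algebra.
From mathcomp Require Import all_classical all_reals all_analysis.
Import Order.TTheory GRing.Theory Num.Theory.
Local Open Scope classical_set_scope.
Local Open Scope ring_scope.

(** For [c >= 0] and real [t], [max |c - t| |c + t| = c + |t|]; taking suprema
    over [S], the constant functions [c] and [-c] satisfy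
    [max (d(c, y), d(-c, y)) >= c + d(0, y)], i.e. [max (h_y c) (h_y (-c)) >= c].
    This inequality passes to pointwise limits, so every metric functional
    satisfies it, which is impossible for a function bounded by some [M < c]. *)

Section PointwiseClosure.
Context {T : Type} {R : realType}.

Lemma ptws_near_eval (h : {ptws T -> R^o}) (t : T) {e : R} :
  0 < e -> nbhs h [set g : {ptws T -> R^o} | `|h t - g t| < e].
Proof.
move=> e_gt0; have /cvg_sup/(_ t) : h --> h by apply: cvg_id.
apply; move: (@initial_continuous _ R^o (fun f : T -> R^o => f t) h).
by move=> /cvgr_dist_lt; apply.
Qed.

Lemma closure_ptws_approx2 {A : set {ptws T -> R^o}} {h : {ptws T -> R^o}}
    (t1 t2 : T) {e : R} :
  closure A h -> 0 < e ->
  exists2 g, A g & `|h t1 - g t1| < e /\ `|h t2 - g t2| < e.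
Proof.
move=> clAh e_gt0.
have [g [Ag close_g]] :=
  clAh _ (filterI (ptws_near_eval h t1 e_gt0) (ptws_near_eval h t2 e_gt0)).
by exists g.
Qed.

End PointwiseClosure.

Section LinfDist.
Context {R : realType} {S : Type}.

Lemma linf_cst_bounded (c : R) : exists M : R, forall s : S, `|c| <= M.
Proof. by exists `|c|. Qed.

Definition linf_cst (c : R) : linf R S := Linf (linf_cst_bounded c).

Lemma linf_dist_ge (f g : linf R S) (s : S) : `|f s - g s| <= linf_dist f g.
Proof.
apply: ub_le_sup; last by exists s.
have [Mf bf] := linf_bounded f; have [Mg bg] := linf_bounded g.
exists (Mf + Mg) => _ [t _ <-].
exact: le_trans (ler_normB _ _) (lerD (bf t) (bg t)).
Qed.

Lemma linf_dist_le (f g : linf R S) (B : R) :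
  inhabited S -> (forall s, `|f s - g s| <= B) -> linf_dist f g <= B.
Proof.
move=> [s0] fgB; apply: ge_sup; first by exists `|f s0 - g s0|, s0.
by move=> _ [t _ <-].
Qed.

End LinfDist.

Arguments linf_cst {R} S c.

Lemma addr_norm_le_max_dist {R : realDomainType} (c t : R) :
  0 <= c -> c + `|t| <= Num.max `|c - t| `|- c - t|.
Proof.
move=> c_ge0; rewrite le_max; have [t_ge0|t_lt0] := lerP 0 t.
  by rewrite ger0_norm // -opprD normrN ler_norm orbT.
by rewrite ltr0_norm // ler_norm.
Qed.

Lemma hfun_max_cst_ge {R : realType} {S : Type} (y : linf R S) (c : R) :
  inhabited S -> 0 <= c ->
  c <= Num.max (hfun y (linf_cst S c)) (hfun y (linf_cst S (- c))).
Proof.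
move=> hS c_ge0; rewrite /hfun -addr_maxl lerBrDr [c + _]addrC -lerBrDr.
apply: linf_dist_le => // s; rewrite lerBrDl /= sub0r normrN.
apply: le_trans (addr_norm_le_max_dist _ (y s) c_ge0) _.
exact: le_max2 (linf_dist_ge (linf_cst S c) y s)
                (linf_dist_ge (linf_cst S (- c)) y s).
Qed.

Lemma metric_functional_max_cst_ge {R : realType} {S : Type}
    {h : linf R S -> R} (c : R) :
  inhabited S -> metric_functional h -> 0 <= c ->
  c <= Num.max (h (linf_cst S c)) (h (linf_cst S (- c))).
Proof.
move=> hS [_ clh] c_ge0; apply/ler_addgt0Pr => e e_gt0.
have [_ [y _ <-] [near_c near_Nc]] :=
  closure_ptws_approx2 (linf_cst S c) (linf_cst S (- c)) clh e_gt0.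
rewrite addr_maxl; apply: (le_trans (hfun_max_cst_ge y c hS c_ge0)).
apply: le_max2; apply: ltW; exact: ltr_distlCDr.
Qed.

Lemma metric_functional_unbounded {R : realType} {S : Type} {h : linf R S -> R} :
  inhabited S -> metric_functional h -> unbounded_fun h.
Proof.
move=> hS hmf [M hM].
have h_le_M x : h x <= M := le_trans (ler_norm _) (hM x).
have M_ge0 : 0 <= M := le_trans (normr_ge0 _) (hM (linf0 R S)).
have := metric_functional_max_cst_ge (M + 1) hS hmf (addr_ge0 M_ge0 ler01).
by rewrite le_max => /orP[] /le_trans/(_ (h_le_M _)); rewrite leNgt ltrDl ltr01.
Qed.

Theorem proposition21 (R : realType) (S : Type) (hS : inhabited S) :
  ~ metric_functional (fun _ : linf R S => 0 : R) /\
  (forall h : linf R S -> R, metric_functional h -> unbounded_fun h).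
Proof.
split=> [/(metric_functional_unbounded hS)|h /(metric_functional_unbounded hS)//].
by apply; exists 0 => _; rewrite normr0.
Qed.
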